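(* Let $L$ be a finite lattice, $(x,y,z)\in L^3$ with $x\le y\le z$, let $S_{x,y}$ be a lower cross-cut of $[x,y]$ and $S_{y,z}$ a lower cross-cut of $[y,z]$, and let $S_{x,y,z}=S_{x,y}\sqcup S_{y,z}$. Then $$J(x,y,z)=\sum_{\substack{A\subseteq S_{x,y,z}\\ \bigvee (A\cap S_{x,y})=y\\ \bigvee(A\cap S_{y,z})=z}}(-1)^{|A|}.$$
   Context: For $u\le v$ in $L$, $[u,v]=\{a\in L: u\le a\le v\}$. A lower cross-cut of $[u,v]$ is a set $S\subseteq[u,v]\setminus\{u\}$ such that for every $b\in[u,v]\setminus(S\cup\{u\})$ there is some $a\in S$ with $a<b$. (Note $S_{x,y}\cap S_{y,z}=\emptyset$ since $y\notin S_{y,z}$.) In the sum, $\bigvee(A\cap S_{x,y})$ is the join in $L$, with the join of the empty subset of $S_{x,y}$ taken to be $x$, and $\bigvee(A\cap S_{y,z})$ is the join in $L$, with the join of the empty subset of $S_{y,z}$ taken to be $y$. Let $\delta_3(x,y,z)=1$ if $x=y=z$ and $0$ otherwise. The function $J$ on triples $x\le y\le z$ of $L$ is the unique integer-valued function satisfying $\sum_{x\le a\le y\le b\le z}J(a,y,b)=\delta_3(x,y,z)$ for all $x\le y\le z$ (sum over $a,b\in L$). *)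

From HB Require Import structures.
From mathcomp Require Import all_boot all_order all_algebra.
Set Implicit Arguments. Unset Strict Implicit. Unset Printing Implicit Defensive.
Import Order.Theory GRing.Theory.
Local Open Scope order_scope.

Definition itv_set (d : Order.disp_t) (L : finLatticeType d) (u v : L) : {set L} :=
  [set a : L | (u <= a) && (a <= v)].

Definition lower_crosscut (d : Order.disp_t) (L : finLatticeType d) (u v : L)
    (S : {set L}) : Prop :=
  S \subset itv_set u v :\ u /\
  forall b : L, b \in itv_set u v -> b \notin S -> b != u ->
    exists2 a, a \in S & a < b.

Definition is_J (d : Order.disp_t) (L : finLatticeType d) (J : L -> L -> L -> int)
    : Prop :=
  forall x y z : L, x <= y -> y <= z ->
    (\sum_(a : L | ((x <= a) && (a <= y))%O) \sum_(b : L | ((y <= b) && (b <= z))%O) J a y b)%R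
    = (if (x == y) && (y == z) then 1%R else 0%R).

Definition join_from (d : Order.disp_t) (L : finLatticeType d) (e : L) (B : {set L}) : L :=
  \big[Order.join/e]_(a in B) a.

From HB Require Import structures.
From mathcomp Require Import all_boot all_order all_algebra.
Import Order.Theory GRing.Theory Num.Theory.
Local Open Scope ring_scope.
Set Implicit Arguments. Unset Strict Implicit. Unset Printing Implicit Defensive.

(* For a lower cross-cut S of [u,v], let mu_S(u,w) be the signed count of the
   subsets of S whose join (starting from u) is w.  The subsets with join below
   t are exactly the subsets of the elements of S below t, and a cross-cut has
   such an element unless t = u; hence sum_{u <= w <= t} mu_S(u,w) = delta(u,t)
   on [u,v], i.e. mu_S is the Moebius function of [u,v] (Rota's cross-cut
   theorem).  Moebius inversion in the first variable of the relation defining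
   J gives sum_{y <= b <= t} J(x,y,b) = mu(x,y) delta(y,t), which determines
   J(x,y,-) on [y,z]: J(x,y,z) = mu_Sxy(x,y) mu_Syz(y,z).  The two cross-cuts are
   disjoint, so this product of signed sums is the signed sum over subsets of
   their union. *)

Lemma lt_fin_ind (d : Order.disp_t) (T : finPOrderType d) (P : T -> Prop) :
  (forall t, (forall b, (b < t)%O -> P b) -> P t) -> forall t, P t.
Proof.
move=> IH t; have [n] := ubnP #|[set b | (b < t)%O]|.
elim: n t => // n IHn t /ltnSE lt_n; apply: IH => b bt; apply: IHn.
apply: leq_trans lt_n; apply: proper_card; apply/properP; split.
  by apply/subsetP => c; rewrite !inE => /lt_trans; apply.
by exists b; rewrite !inE ?bt ?ltxx.
Qed.

Lemma sum_sign_subsets (T : finType) (B : {set T}) :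
  \sum_(A : {set T} | A \subset B) (-1) ^+ #|A| = (B == set0)%:R :> int.
Proof.
have [->|[b bB]] := set_0Vmem B.
  by rewrite eqxx (big_pred1 set0) ?cards0 // => A; rewrite subset0.
have /negPf-> : B != set0 by apply/set0Pn; exists b.
pose flip (A : {set T}) := if b \in A then A :\ b else b |: A.
have flipK : involutive flip.
  move=> A; rewrite /flip; have [bA|bA] := boolP (b \in A).
    by rewrite setD11 setD1K.
  by rewrite setU11 setU1K.
have flipB (A : {set T}) : (flip A \subset B) = (A \subset B).
  rewrite /flip; case: ifP => [bA|_]; last by rewrite subUset sub1set bB.
  by rewrite -[in RHS](setD1K bA) subUset sub1set bB.
have flip_sign (A : {set T}) : (-1) ^+ #|flip A| = - (-1) ^+ #|A| :> int.
  rewrite /flip; case: ifP => bA; last by rewrite cardsU1 bA exprS mulN1r.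
  by rewrite -{2}(setD1K bA) cardsU1 setD11 exprS mulN1r opprK.
set S := LHS; suff: S *+ 2 == 0 by rewrite mulrn_eq0 => /eqP.
rewrite mulr2n {2}/S (reindex_inj (inv_inj flipK)) (eq_bigl _ _ flipB) -big_split /=.
by rewrite big1 // => A _; rewrite flip_sign addrN.
Qed.

Lemma sum_sign_setU (T : finType) (S1 S2 : {set T}) (P1 P2 : pred {set T}) :
  S1 :&: S2 = set0 ->
  \sum_(A : {set T} | [&& A \subset S1 :|: S2, P1 (A :&: S1) & P2 (A :&: S2)])
     (-1) ^+ #|A|
  = (\sum_(A1 : {set T} | (A1 \subset S1) && P1 A1) (-1) ^+ #|A1|)
  * (\sum_(A2 : {set T} | (A2 \subset S2) && P2 A2) (-1) ^+ #|A2|) :> int.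
Proof.
move=> S12; rewrite big_distrlr pair_big_dep /=.
rewrite (reindex_onto (fun A => (A :&: S1, A :&: S2)) (fun p => p.1 :|: p.2)) /=.
  apply: eq_big => A.
    rewrite -setIUr !subsetIr (sameP eqP setIidPl) /=.
    by case: (A \subset _); rewrite ?andbT ?andbF.
  move=> /and3P[/setIidPl AS _ _].
  by rewrite -exprD -cardsUI -setIUr AS setIACA setIid S12 setI0 cards0 addn0.
move=> [A1 A2] /= /and3P[/andP[A1S1 _] A2S2 _].
have A1S2 : A1 :&: S2 = set0 by apply/eqP; rewrite -subset0 -S12 setSI.
have A2S1 : A2 :&: S1 = set0 by apply/eqP; rewrite -subset0 -S12 setIC setIS.
by rewrite !setIUl A1S2 A2S1 setU0 set0U (setIidPl A1S1) (setIidPl A2S2).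
Qed.

Section CrosscutMobius.
Variables (d : Order.disp_t) (L : finLatticeType d).
Implicit Types (x y z u v t w : L) (A S : {set L}).
Local Open Scope order_scope.

Lemma join_from_le u t A :
  (join_from u A <= t) = (u <= t) && (A \subset [set a | a <= t]).
Proof.
have joins_le (s : seq L) :
    (\big[Order.join/u]_(a <- s) a <= t) = (u <= t) && all (<= t) s.
  by elim: s => [|a s IH]; rewrite ?big_nil ?andbT // big_cons leUx IH andbCA.
rewrite /join_from -big_enum joins_le; congr (_ && _).
apply/allP/subsetP => le_t a.
  by move=> aA; rewrite inE; apply: le_t; rewrite mem_enum.
by rewrite mem_enum => /le_t; rewrite inE.
Qed.

Lemma join_from_ge u A : u <= join_from u A.
Proof. by move: (join_from_le u (join_from u A) A); rewrite lexx => /esym/andP[]. Qed.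

Lemma eq_from_interval_sums (R : zmodType) y z (f1 f2 : L -> R) :
    (forall t, y <= t -> t <= z ->
       \sum_(b | y <= b <= t) f1 b = \sum_(b | y <= b <= t) f2 b) ->
  forall t, y <= t -> t <= z -> f1 t = f2 t.
Proof.
move=> eq_sums; elim/lt_fin_ind => t IH yt tz.
have := eq_sums t yt tz.
rewrite (bigD1 t) ?yt ?lexx //= [in RHS](bigD1 t) ?yt ?lexx //=.
rewrite (eq_bigr f2) => [/addIr //|b /andP[/andP[yb bt] bnt]].
by apply: IH yb (le_trans bt tz); rewrite lt_neqAle bnt.
Qed.

Definition crosscut_mu u S w : int :=
  \sum_(A : {set L} | (A \subset S) && (join_from u A == w)) (-1) ^+ #|A|.

Lemma crosscut_below_eq0 u v S t : lower_crosscut u v S -> u <= t -> t <= v ->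
  (S :&: [set a | a <= t] == set0) = (t == u).
Proof.
move=> [/subsetP S_itv cover] ut tv; have [->|tnu] := eqVneq t u; last apply/negbTE.
  apply/eqP/setP => a; rewrite !inE; apply/negbTE/andP => -[/S_itv].
  rewrite !inE => /andP[anu /andP[ua _]] au.
  by move/negP: anu; apply; apply/eqP/le_anti; rewrite au ua.
apply/set0Pn; have [tS|tNS] := boolP (t \in S); first by exists t; rewrite !inE tS lexx.
have [|a aS lt_at] := cover t _ tNS tnu; first by rewrite inE ut tv.
by exists a; rewrite !inE aS ltW.
Qed.

Lemma sum_crosscut_mu u v S t : lower_crosscut u v S -> u <= t -> t <= v ->
  \sum_(w | u <= w <= t) crosscut_mu u S w = (u == t)%:R.
Proof.
move=> cut ut tv.
rewrite eq_sym -(crosscut_below_eq0 cut) // -sum_sign_subsets.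
rewrite (partition_big (join_from u) (fun w => u <= w <= t)) => [|A]; last first.
  by rewrite subsetI => /andP[_ At]; rewrite join_from_ge join_from_le ut.
apply: eq_bigr => w /andP[_ wt]; rewrite /crosscut_mu; apply: eq_bigl => A.
rewrite subsetI; have [Aw|] := eqVneq (join_from u A) w; rewrite ?andbF //.
by move: wt; rewrite -Aw join_from_le => /andP[_ ->]; rewrite !andbT.
Qed.

Lemma mobius_inversion_upper (R : pzSemiRingType) (g F : L -> R) x y :
    x <= y ->
    (forall a, x <= a -> a <= y -> \sum_(w : L | x <= w <= a) g w = (x == a)%:R) ->
  \sum_(w : L | x <= w <= y) g w * \sum_(a : L | (w <= a <= y)%O) F a = F x.
Proof.
move=> xy g_inv; under eq_bigr do rewrite big_distrr /=.
rewrite (exchange_big_dep (fun a : L => x <= a <= y)) /=; last first.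
  by move=> w a /andP[xw _] /andP[wa ->]; rewrite (le_trans xw wa).
transitivity (\sum_(a : L | x <= a <= y) (x == a)%:R * F a).
  apply: eq_bigr => a /andP[xa ay]; rewrite -big_distrl -g_inv //=.
  congr (_ * _); apply: eq_bigl => w; rewrite ay andbT.
  by apply/andP/andP => [[/andP[-> _] ->] | [xw wa]] //; rewrite xw (le_trans wa ay).
rewrite (bigD1 x) ?lexx //= eqxx mul1r big1 ?addr0 // => a /andP[_ ax].
by rewrite eq_sym (negPf ax) mul0r.
Qed.

Lemma crosscut_disjoint x y z S1 S2 :
  lower_crosscut x y S1 -> lower_crosscut y z S2 -> S1 :&: S2 = set0.
Proof.
move=> [/subsetP S1_itv _] [/subsetP S2_itv _]; apply/setP => a; rewrite !inE.
apply/negbTE/andP => -[/S1_itv + /S2_itv]; rewrite !inE.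
move=> /andP[_ /andP[_ ay]] /andP[any /andP[ya _]].
by move/negP: any; apply; apply/eqP/le_anti; rewrite ay ya.
Qed.

Section DefiningRelation.
Variables (J : L -> L -> L -> int) (HJ : is_J J).

Lemma J_upper_sum x y S t : lower_crosscut x y S -> x <= y -> y <= t ->
  \sum_(b : L | y <= b <= t) J x y b = crosscut_mu x S y * (y == t)%:R.
Proof.
move=> cut xy yt.
rewrite -(mobius_inversion_upper (g := crosscut_mu x S)
  (fun a => \sum_(b : L | (y <= b <= t)%O) J a y b) xy); last first.
  by move=> a xa ay; apply: sum_crosscut_mu cut xa ay.
under eq_bigr => w /andP[_ wy] do rewrite HJ //.
rewrite (bigD1 y) ?xy ?lexx //= eqxx big1 ?addr0 => [|w /andP[_ /negPf->]].
  by case: (y == t).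
by rewrite mulr0.
Qed.

Lemma J_factor x y z S1 S2 t :
    lower_crosscut x y S1 -> lower_crosscut y z S2 -> x <= y -> y <= t -> t <= z ->
  J x y t = crosscut_mu x S1 y * crosscut_mu y S2 t.
Proof.
move=> cut1 cut2 xy; move: t.
apply: (eq_from_interval_sums (f2 := fun b => _ * crosscut_mu y S2 b)) => t yt tz.
by rewrite (J_upper_sum cut1) // -big_distrr /= (sum_crosscut_mu cut2).
Qed.

End DefiningRelation.
End CrosscutMobius.

Theorem theorem5p9 (d : Order.disp_t) (L : finLatticeType d)
    (J : L -> L -> L -> int) (HJ : is_J J)
    (x y z : L) (hxy : (x <= y)%O) (hyz : (y <= z)%O)
    (Sxy Syz : {set L})
    (hSxy : lower_crosscut x y Sxy) (hSyz : lower_crosscut y z Syz) :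
  J x y z =
  (\sum_(A : {set L} | [&& A \subset Sxy :|: Syz,
                          join_from x (A :&: Sxy) == y &
                          join_from y (A :&: Syz) == z]) (-1) ^+ #|A|)%R.
Proof.
rewrite (J_factor HJ hSxy hSyz) //; apply/esym.
exact: (sum_sign_setU (pred1 y \o join_from x) (pred1 z \o join_from y)
                      (crosscut_disjoint hSxy hSyz)).
Qed.
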